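(* Let $\mathbb{K}\in\{\mathbb{R},\mathbb{C}\}$ and $w_1,w_2\in\mathsf{GL}_d(\mathbb{K})$. Then for each $i\in\{1,2\}$, \[\frac{\sigma_1}{\sigma_2}(w_1w_2)\ge\frac{\sigma_d(w_i)^2}{\sigma_1(w_i)^2}\,\frac{\sigma_1}{\sigma_2}(w_1)\,\frac{\sigma_1}{\sigma_2}(w_2).\]
   Context: $\sigma_1(g)\ge\dots\ge\sigma_d(g)$ are the singular values of $g$, and $\frac{\sigma_i}{\sigma_j}(g)=\sigma_i(g)/\sigma_j(g)$. *)

From HB Require Import structures.
From mathcomp Require Import all_boot all_order all_algebra.
From mathcomp Require Import complex.
From mathcomp Require Import reals.
Set Implicit Arguments. Unset Strict Implicit. Unset Printing Implicit Defensive.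
Import Order.TTheory GRing.Theory Num.Theory.
Local Open Scope ring_scope.

(* Singular values of a square complex matrix g (over C = R[i], R real closed):
   the square roots of the eigenvalues of the Hermitian matrix g^* g, counted
   with (algebraic) multiplicity, i.e. of the roots of its characteristic
   polynomial, listed in non-increasing order.  The eigenvalues of g^* g are
   real and nonnegative; we take their real parts (as elements of R). *)
Definition adjmx (R : rcfType) (d : nat) (g : 'M[R[i]]_d) : 'M[R[i]]_d :=
  (map_mx (@conjc R) g)^T.

Definition char_roots (F : closedFieldType) (p : {poly F}) : seq F :=
  sval (closed_field_poly_normal p).

Definition singular_values (R : rcfType) (d : nat) (g : 'M[R[i]]_d) : seq R :=
  sort (fun x y : R => y <= x)
    [seq Num.sqrt (complex.Re z) | z <- char_roots (char_poly (adjmx g *m g))].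

(* sigma_k(g), 1-based index k (1 <= k <= d) *)
Definition sigmaC (R : rcfType) (d : nat) (g : 'M[R[i]]_d) (k : nat) : R :=
  nth 0 (singular_values g) k.-1.

Definition sigmaR (R : rcfType) (d : nat) (g : 'M[R]_d) (k : nat) : R :=
  sigmaC (map_mx (fun x : R => (x%:C)%C) g) k.

From HB Require Import structures.
From mathcomp Require Import all_boot all_order all_algebra.
From mathcomp Require Import complex.
From mathcomp Require Import reals.
From mathcomp Require Import fingroup perm ring.
Set Implicit Arguments. Unset Strict Implicit. Unset Printing Implicit Defensive.
Import Order.TTheory GRing.Theory Num.Theory.
Local Open Scope ring_scope.
Local Open Scope sesquilinear_scope.
Local Open Scope complex_scope.

(* Over C, let N_g(u) := '[u *m g^t*] = u (g^* g) u^*.  Diagonalising the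
   Hermitian matrix g^* g in a unitary basis shows that sigma_1(g)^2 and
   sigma_d(g)^2 bound N_g(u) / '[u] from above and below, that sigma_1^2 is
   attained at a unit eigenvector e, that N_g <= sigma_2^2 '[_] on the
   orthogonal of e, and that every hyperplane contains some x <> 0 with
   N_g(x) >= sigma_2^2 '[x] (the min-max principle for sigma_2).  For a product
   this yields
     sigma_1(w1 w2) >= sigma_d(w1) sigma_1(w2),  sigma_1(w1) sigma_d(w2),
     sigma_2(w1 w2) <= sigma_2(w1) sigma_1(w2),  sigma_1(w1) sigma_2(w2),
   and dividing, with sigma_d <= sigma_2, gives the bound for w = w1 and for
   w = w2. *)

Lemma char_poly_similar (F : fieldType) n (P A : 'M[F]_n) : P \in unitmx ->
  char_poly (invmx P *m A *m P) = char_poly A.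
Proof.
move=> P_unit; rewrite /char_poly /char_poly_mx.
have PX_unit : map_mx polyC P \in unitmx by rewrite map_unitmx.
have XE : ('X%:M : 'M_n) = invmx (map_mx polyC P) *m 'X%:M *m map_mx polyC P.
  by rewrite mul_mx_scalar -scalemxAl mulVmx // scalemx1.
rewrite [in LHS]XE !map_mxM map_invmx -mulmxBl -mulmxBr !det_mulmx det_inv.
by rewrite mulrAC mulVr ?mul1r // -unitmxE.
Qed.

Lemma nth_sort_perm (T : eqType) (leT : rel T) (x0 : T) n (mu : 'I_n -> T) :
  exists s : 'S_n, forall k : 'I_n,
    nth x0 (sort leT [seq mu j | j <- enum 'I_n]) k = mu (s k).
Proof.
have /tuple_permP[s sE] :
    perm_eq (sort leT [seq mu j | j <- enum 'I_n]) [tuple mu j | j < n].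
  by rewrite perm_sort.
by exists s => k; rewrite sE -tnth_nth !tnth_mktuple.
Qed.

Lemma ratio_lower_bound (R : realFieldType) (p1 p2 a1 a2 ad b1 b2 : R) :
  0 < ad -> ad <= a2 -> a2 <= a1 -> 0 <= b1 -> 0 < b2 -> 0 < p2 ->
  ad * b1 <= p1 -> p2 <= a1 * b2 ->
  ad ^+ 2 / a1 ^+ 2 * (a1 / a2) * (b1 / b2) <= p1 / p2.
Proof.
move=> ad_gt0 ad_le a2_le b1_ge0 b2_gt0 p2_gt0 p1_ge p2_le.
have a2_gt0 := lt_le_trans ad_gt0 ad_le; have a1_gt0 := lt_le_trans a2_gt0 a2_le.
have -> : ad ^+ 2 / a1 ^+ 2 * (a1 / a2) * (b1 / b2) =
    ad * b1 / (a1 * b2) * (ad / a2).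
  by field; rewrite !gt_eqF.
have ad_b1_ge0 : 0 <= ad * b1 by rewrite mulr_ge0 // ltW.
have a1_b2_gt0 : 0 < a1 * b2 by rewrite mulr_gt0.
apply: le_trans (ler_piMr _ _) _.
- by rewrite divr_ge0 // (ltW a1_b2_gt0).
- by rewrite ler_pdivrMr // mul1r.
- by rewrite ler_pM // ?invr_ge0 ?(ltW a1_b2_gt0) // lef_pV2 ?posrE.
Qed.

Section SingularValues.
Variable R : rcfType.
Local Notation C := R[i].
Local Notation "''[' u , v ]" := (@dotmx C _ u v).
Local Notation "''[' u ]" := (@dotmx C _ u u).

Lemma dotmx_mulmx_unitary m n (M : 'M[C]_(m, n)) (u v : 'rV_m) :
  M \is unitarymx -> '[u *m M, v *m M] = '[u, v].
Proof.
move=> /unitarymxP MM.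
by rewrite !dotmxE trmx_mul map_mxM mulmxA -(mulmxA u) MM mulmx1.
Qed.

Lemma dotmx_sum n (u v : 'rV[C]_n) : '[u, v] = \sum_j u 0 j * (v 0 j)^*.
Proof. by rewrite dotmxE mxE; apply: eq_bigr => j _; rewrite !mxE. Qed.

Lemma dotmx_adj n (u v : 'rV[C]_n) (g : 'M[C]_n) : '[u *m g^t*, v] = '[u, v *m g].
Proof. by rewrite !dotmxE trmx_mul map_mxM mulmxA. Qed.

Section DiagonalForm.
Variables (n : nat) (P : 'M[C]_n) (lam : 'I_n -> R).
Hypothesis P_unitary : P \is unitarymx.

Definition diag_form (u : 'rV[C]_n) : C :=
  \sum_j (lam j)%:C * `|(u *m P^t*) 0 j| ^+ 2.

Lemma coord_dotmx u v :
  '[u, v] = \sum_j (u *m P^t*) 0 j * ((v *m P^t*) 0 j)^*.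
Proof.
have Pt_unitary : P^t* \is unitarymx by rewrite trmxC_unitary.
by rewrite -(dotmx_mulmx_unitary u v Pt_unitary) dotmx_sum.
Qed.

Lemma coord_dnorm u : '[u] = \sum_j `|(u *m P^t*) 0 j| ^+ 2.
Proof. by rewrite coord_dotmx; apply: eq_bigr => j _; rewrite normCK. Qed.

Lemma diag_form_le (c : R) u :
  (forall j, (u *m P^t*) 0 j != 0 -> lam j <= c) -> diag_form u <= c%:C * '[u].
Proof.
move=> lam_le; rewrite coord_dnorm mulr_sumr; apply: ler_sum => j _.
have [->|uj] := eqVneq ((u *m P^t*) 0 j) 0; first by rewrite normr0 expr0n !mulr0.
by rewrite ler_wpM2r ?exprn_ge0 // lecR lam_le.
Qed.

Lemma diag_form_ge (c : R) u :
  (forall j, (u *m P^t*) 0 j != 0 -> c <= lam j) -> c%:C * '[u] <= diag_form u.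
Proof.
move=> lam_ge; rewrite coord_dnorm mulr_sumr; apply: ler_sum => j _.
have [->|uj] := eqVneq ((u *m P^t*) 0 j) 0; first by rewrite normr0 expr0n !mulr0.
by rewrite ler_wpM2r ?exprn_ge0 // lecR lam_ge.
Qed.

Definition eigvec j : 'rV[C]_n := delta_mx 0 j *m P.

Lemma coord_eigvec j : eigvec j *m P^t* = delta_mx 0 j.
Proof. by rewrite -mulmxA (unitarymxP P_unitary) mulmx1. Qed.

Lemma dotmx_eigvec u j : '[u, eigvec j] = (u *m P^t*) 0 j.
Proof.
rewrite coord_dotmx coord_eigvec (bigD1 j) //= big1 => [|k /negPf kj].
  by rewrite !mxE !eqxx conjC1 mulr1 addr0.
by rewrite !mxE kj conjC0 mulr0.
Qed.

Lemma dnorm_eigvec j : '[eigvec j] = 1.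
Proof. by rewrite dotmx_eigvec coord_eigvec mxE !eqxx. Qed.

Lemma diag_form_eigvec j : diag_form (eigvec j) = (lam j)%:C.
Proof.
rewrite /diag_form coord_eigvec (bigD1 j) //= big1 => [|k /negPf kj].
  by rewrite !mxE !eqxx normr1 expr1n mulr1 addr0.
by rewrite !mxE kj normr0 expr0n mulr0.
Qed.

Lemma exists_orth_diag_form_ge (c : R) j1 j2 a : j1 != j2 ->
  c <= lam j1 -> c <= lam j2 ->
  exists2 x, x != 0 & '[x, a] = 0 /\ c%:C * '[x] <= diag_form x.
Proof.
move=> j12 c_le1 c_le2.
(* [b] is kept abstract so that [mxE] does not expand its entries. *)
have [b bE] : {b | a *m P^t* = b} by exists (a *m P^t*).
pose e j : 'rV[C]_n := delta_mx 0 j.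
(* [y] lies in the span of the coordinate vectors [j1] and [j2] and is
   orthogonal to [b]. *)
pose y := if b 0 j1 == 0 then e j1 else (b 0 j2)^* *: e j1 - (b 0 j1)^* *: e j2.
have y_supp j : j != j1 -> j != j2 -> y 0 j = 0.
  move=> /negPf jj1 /negPf jj2.
  by rewrite /y; case: ifP => _; rewrite !mxE jj1 ?jj2 ?mulr0 ?subr0.
have yPK : y *m P *m P^t* = y by rewrite -mulmxA (unitarymxP P_unitary) mulmx1.
have y_neq0 : y != 0.
  rewrite /y; case: ifPn => bj1; apply/negP => /eqP/rowP.
    by move/(_ j1); rewrite !mxE !eqxx => /eqP; rewrite oner_eq0.
  move/(_ j2); rewrite !mxE !eqxx eq_sym (negbTE j12) mulr0 sub0r mulr1.
  by move=> /eqP; rewrite oppr_eq0 conjC_eq0 (negbTE bj1).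
exists (y *m P).
  by apply: contraNneq y_neq0 => y0; rewrite -yPK y0 mul0mx.
split.
  rewrite coord_dotmx yPK (bigD1 j1) //= (bigD1 j2) 1?eq_sym //= big1.
    have j21 : (j2 == j1) = false by rewrite eq_sym (negbTE j12).
    rewrite addr0 bE /y; case: ifPn => bj1; rewrite !mxE !eqxx /= j21.
      by rewrite (eqP bj1) conjC0 mulr0 mul0r add0r.
    by rewrite (negbTE j12) !mulr0 !mulr1 subr0 sub0r mulNr mulrC addrN.
  by move=> j /andP[jj1 jj2]; rewrite y_supp ?mul0r.
apply: diag_form_ge => j; rewrite yPK => yj.
have [->|jj1] := eqVneq j j1 => //.
have [->|jj2] := eqVneq j j2 => //.
by rewrite y_supp ?eqxx in yj.
Qed.

End DiagonalForm.

Lemma singular_values_spectral n (g : 'M[C]_n) :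
  exists P (lam : 'I_n -> R), [/\ P \is unitarymx, forall j, 0 <= lam j,
    singular_values g =
      sort (fun x y => y <= x) [seq Num.sqrt (lam j) | j <- enum 'I_n]
    & forall u, '[u *m g^t*] = diag_form P lam u].
Proof.
set A := adjmx g *m g.
have AE : A = g^t* *m g by rewrite /A /adjmx map_trmx.
have A_herm : A \is hermsymmx.
  by apply/is_hermitianmxP; rewrite expr0 scale1r AE trmx_mul map_mxM trmxCK.
have /orthomx_spectralP := hermitian_normalmx A_herm.
have /mxOverP l_real := hermitian_spectral_diag_real A_herm.
set P := spectralmx A; set l := spectral_diag A => A_diag.
have P_unitary : P \is unitarymx by apply: spectral_unitarymx.
pose lam j := complex.Re (l 0 j).
have lamE j : (lam j)%:C = l 0 j := RRe_real (l_real 0 j).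
have formE u : '[u *m g^t*] = diag_form P lam u.
  rewrite dotmxE trmx_mul map_mxM trmxCK mulmxA -(mulmxA u) -AE A_diag.
  have yE : P *m u^t* = (u *m P^t*)^t* by rewrite trmx_mul map_mxM trmxCK.
  rewrite invmx_unitary // !mulmxA -[_ *m P *m _]mulmxA yE mul_mx_diag mxE.
  by apply: eq_bigr => j _; rewrite !mxE lamE normCK mulrCA mulrA.
exists P, lam; split => //.
  move=> j; rewrite -lecR -(diag_form_eigvec lam P_unitary) -formE.
  exact: dnorm_ge0.
apply/perm_sortP.
- by move=> x y; rewrite le_total.
- by move=> x y z yx zy; apply: le_trans zy yx.
- by move=> x y /andP[yx xy]; apply/le_anti/andP.
have -> : [seq Num.sqrt (lam j) | j <- enum 'I_n] =
    map Num.sqrt (map (@complex.Re R) [seq l 0 j | j <- enum 'I_n]).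
  by rewrite -!map_comp.
rewrite (map_comp Num.sqrt (@complex.Re R)); apply/perm_map/perm_map.
rewrite /char_roots; case: closed_field_poly_normal => r /= rE.
apply: prod_XsubC_eq; rewrite big_map big_enum /=.
rewrite -[LHS]scale1r -(monicP (char_poly_monic A)) -rE -/A A_diag.
rewrite char_poly_similar ?unitarymx_unit // char_poly_trig ?diag_mx_is_trig //.
by apply: eq_bigr => j _; rewrite mxE eqxx mulr1n.
Qed.

Lemma sigmaC_ge0 n (g : 'M[C]_n) k : 0 <= sigmaC g k.
Proof.
rewrite /sigmaC; case: (ltnP k.-1 (size (singular_values g))) => [lt_k|le_k].
  by have := mem_nth 0 lt_k; rewrite mem_sort => /mapP[z _ ->]; apply: sqrtr_ge0.
by rewrite nth_default.
Qed.

Lemma sigmaC_spectral n (g : 'M[C]_n) :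
  exists P (lam : 'I_n -> R) (s : 'S_n),
  [/\ P \is unitarymx, forall u, '[u *m g^t*] = diag_form P lam u,
      forall j, 0 <= lam j, forall k : 'I_n, sigmaC g k.+1 = Num.sqrt (lam (s k))
    & forall k l : 'I_n, (k <= l)%N -> lam (s l) <= lam (s k)].
Proof.
have [P [lam [P_unitary lam_ge0 svE formE]]] := singular_values_spectral g.
have [s sE] := nth_sort_perm (fun x y : R => y <= x) 0 (fun j => Num.sqrt (lam j)).
exists P, lam, s; split=> // [k|k l le_kl]; first by rewrite /sigmaC svE sE.
have ge_trans : transitive (fun x y : R => y <= x).
  by move=> y x z yx zy; apply: le_trans zy yx.
have sorted_sv := sort_sorted (fun x y => le_total y x)
  [seq Num.sqrt (lam j) | j <- enum 'I_n].
rewrite -ler_sqrt // -!sE; apply: (sorted_leq_nth ge_trans _ _ sorted_sv) => //.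
  by rewrite inE size_sort size_map size_enum_ord.
by rewrite inE size_sort size_map size_enum_ord.
Qed.

Section Extremal.
Variables (n : nat) (g : 'M[C]_n).
Hypothesis n_gt1 : (1 < n)%N.

Let top : 'I_n := Ordinal (ltnW n_gt1).
Let second : 'I_n := Ordinal n_gt1.
Let bottom : 'I_n := Ordinal (eq_leq (prednK (ltnW n_gt1))).
Let sigmaC_bottom : sigmaC g n = sigmaC g bottom.+1.
Proof. by congr (sigmaC g _); rewrite /= prednK // ltnW. Qed.

Lemma dnorm_adj_le u : '[u *m g^t*] <= (sigmaC g 1 ^+ 2)%:C * '[u].
Proof.
have [P [lam [s [P_unitary formE lam_ge0 sE s_mono]]]] := sigmaC_spectral g.
rewrite formE (sE top) sqr_sqrtr //; apply: (diag_form_le P_unitary) => j _.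
by rewrite -[j](permKV s); apply: s_mono.
Qed.

Lemma dnorm_adj_ge u : (sigmaC g n ^+ 2)%:C * '[u] <= '[u *m g^t*].
Proof.
have [P [lam [s [P_unitary formE lam_ge0 sE s_mono]]]] := sigmaC_spectral g.
rewrite formE sigmaC_bottom (sE bottom) sqr_sqrtr //.
apply: (diag_form_ge P_unitary) => j _; rewrite -[j](permKV s); apply: s_mono.
by rewrite -ltnS prednK // ltnW.
Qed.

Lemma sigmaC1_attained :
  exists e, [/\ '[e] = 1, '[e *m g^t*] = (sigmaC g 1 ^+ 2)%:C
    & forall u, '[u, e] = 0 -> '[u *m g^t*] <= (sigmaC g 2 ^+ 2)%:C * '[u]].
Proof.
have [P [lam [s [P_unitary formE lam_ge0 sE s_mono]]]] := sigmaC_spectral g.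
exists (eigvec P (s top)).
rewrite (dnorm_eigvec P_unitary) formE (diag_form_eigvec lam P_unitary).
rewrite (sE top) (sE second) !sqr_sqrtr //; split=> // u.
rewrite (dotmx_eigvec P_unitary) formE => u_top.
apply: (diag_form_le P_unitary) => j uj; rewrite -[j](permKV s); apply: s_mono.
rewrite lt0n; apply: contraNneq uj => sj0; suff -> : j = s top by rewrite u_top.
by rewrite -[j](permKV s); congr (s _); apply: val_inj.
Qed.

Lemma sigmaC2_orth_attained a :
  exists2 x, x != 0 & '[x, a] = 0 /\ (sigmaC g 2 ^+ 2)%:C * '[x] <= '[x *m g^t*].
Proof.
have [P [lam [s [P_unitary formE lam_ge0 sE s_mono]]]] := sigmaC_spectral g.
rewrite (sE second) sqr_sqrtr //.
have s12 : s top != s second by rewrite (inj_eq perm_inj).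
have [x x_neq0 [xa x_ge]] :=
  exists_orth_diag_form_ge P_unitary a s12 (s_mono top second isT) (lexx _).
by exists x; rewrite ?formE.
Qed.

Lemma sigmaC_gt0 : g \in unitmx -> 0 < sigmaC g n.
Proof.
move=> g_unit.
have [P [lam [s [P_unitary formE lam_ge0 sE _]]]] := sigmaC_spectral g.
rewrite sigmaC_bottom (sE bottom) sqrtr_gt0 -ltcR.
rewrite -(diag_form_eigvec lam P_unitary) -formE dnorm_gt0.
have gt_unit : g^t* \in unitmx by rewrite map_unitmx unitmx_tr.
apply/eqP => e0; have /eqP := dnorm_eigvec P_unitary (s bottom).
rewrite -[eigvec _ _](mulmxK gt_unit) e0 mul0mx dotmxE mul0mx mxE.
by rewrite eq_sym oner_eq0.
Qed.

Lemma sigmaC_n_le_2 : sigmaC g n <= sigmaC g 2.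
Proof.
have [_ [lam [s [_ _ lam_ge0 sE s_mono]]]] := sigmaC_spectral g.
rewrite sigmaC_bottom (sE bottom) (sE second) ler_sqrt //.
by rewrite s_mono //= ltn_predRL.
Qed.

Lemma sigmaC_2_le_1 : sigmaC g 2 <= sigmaC g 1.
Proof.
have [_ [lam [s [_ _ lam_ge0 sE s_mono]]]] := sigmaC_spectral g.
by rewrite (sE second) (sE top) ler_sqrt // s_mono.
Qed.

Lemma sigmaC2_gt0 : g \in unitmx -> 0 < sigmaC g 2.
Proof. by move=> g_unit; apply: lt_le_trans (sigmaC_gt0 g_unit) sigmaC_n_le_2. Qed.

End Extremal.

Lemma sqrC_ge0 (x : R) : 0 <= (x ^+ 2)%:C.
Proof. by rewrite lecR sqr_ge0. Qed.

Lemma ler_sqrC_dnorm n (x y : R) (u : 'rV[C]_n) : 0 <= x -> 0 <= y ->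
  u != 0 -> (x ^+ 2)%:C * '[u] <= (y ^+ 2)%:C * '[u] -> x <= y.
Proof.
by move=> x_ge0 y_ge0 u_neq0; rewrite ler_pM2r ?dnorm_gt0 // lecR ler_sqr.
Qed.

Lemma mulmx_adj_mul n (u : 'rV[C]_n) (a b : 'M[C]_n) :
  u *m (a *m b)^t* = u *m b^t* *m a^t*.
Proof. by rewrite trmx_mul map_mxM mulmxA. Qed.

Section Product.
Variables (d : nat) (a b : 'M[C]_d).
Hypothesis d_gt1 : (1 < d)%N.

Lemma sigmaC1_mul_ge_1n :
  b \in unitmx -> sigmaC a 1 * sigmaC b d <= sigmaC (a *m b) 1.
Proof.
move=> b_unit; rewrite -ler_sqr ?nnegrE ?mulr_ge0 ?sigmaC_ge0 //.
rewrite exprMn -lecR rmorphM /=.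
have [e [e_norm e_top _]] := sigmaC1_attained a d_gt1.
have bt_unit : b^t* \in unitmx by rewrite map_unitmx unitmx_tr.
pose u := e *m invmx (b^t*).
have uE : u *m b^t* = e by rewrite /u mulmxKV.
have top_le := dnorm_adj_le (a *m b) d_gt1 u.
rewrite mulmx_adj_mul uE e_top in top_le.
have bottom_le := dnorm_adj_ge b d_gt1 u; rewrite uE e_norm in bottom_le.
apply: le_trans (ler_wpM2r (sqrC_ge0 _) top_le) _.
by rewrite mulrAC -mulrA ler_piMr ?sqrC_ge0.
Qed.

Lemma sigmaC1_mul_ge_n1 : sigmaC a d * sigmaC b 1 <= sigmaC (a *m b) 1.
Proof.
rewrite -ler_sqr ?nnegrE ?mulr_ge0 ?sigmaC_ge0 // exprMn -lecR rmorphM /=.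
have [e [e_norm e_top _]] := sigmaC1_attained b d_gt1.
have := dnorm_adj_le (a *m b) d_gt1 e; rewrite e_norm mulr1 mulmx_adj_mul.
by apply: le_trans; rewrite -e_top dnorm_adj_ge.
Qed.

Lemma sigmaC2_mul_le_21 : sigmaC (a *m b) 2 <= sigmaC a 2 * sigmaC b 1.
Proof.
have [e [_ _ e_orth]] := sigmaC1_attained a d_gt1.
have [x x_neq0 [x_orth x_ge]] := sigmaC2_orth_attained (a *m b) d_gt1 (e *m b).
apply: (ler_sqrC_dnorm _ _ x_neq0); rewrite ?mulr_ge0 ?sigmaC_ge0 //.
apply: le_trans x_ge _; rewrite mulmx_adj_mul exprMn rmorphM -mulrA.
apply: le_trans (e_orth _ _) _; first by rewrite dotmx_adj.
by rewrite ler_wpM2l ?sqrC_ge0 ?dnorm_adj_le.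
Qed.

Lemma sigmaC2_mul_le_12 : sigmaC (a *m b) 2 <= sigmaC a 1 * sigmaC b 2.
Proof.
have [e [_ _ e_orth]] := sigmaC1_attained b d_gt1.
have [x x_neq0 [x_orth x_ge]] := sigmaC2_orth_attained (a *m b) d_gt1 e.
apply: (ler_sqrC_dnorm _ _ x_neq0); rewrite ?mulr_ge0 ?sigmaC_ge0 //.
apply: le_trans x_ge _; rewrite mulmx_adj_mul exprMn rmorphM -mulrA.
apply: le_trans (dnorm_adj_le a d_gt1 _) _.
by rewrite ler_wpM2l ?sqrC_ge0 ?e_orth.
Qed.

End Product.

Lemma sigmaC_ratio_mul_ge d : (1 < d)%N ->
  forall w1 w2 : 'M[C]_d, w1 \in unitmx -> w2 \in unitmx ->
  forall w, w = w1 \/ w = w2 ->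
    sigmaC (w1 *m w2) 1 / sigmaC (w1 *m w2) 2 >=
    sigmaC w d ^+ 2 / sigmaC w 1 ^+ 2
      * (sigmaC w1 1 / sigmaC w1 2) * (sigmaC w2 1 / sigmaC w2 2).
Proof.
move=> d_gt1 w1 w2 w1_unit w2_unit w.
have w12_unit : w1 *m w2 \in unitmx by rewrite unitmx_mul w1_unit.
case=> ->; [|rewrite mulrAC]; apply: ratio_lower_bound;
  rewrite ?sigmaC_gt0 ?sigmaC2_gt0 ?sigmaC_n_le_2 ?sigmaC_2_le_1 ?sigmaC_ge0 //.
- exact: sigmaC1_mul_ge_n1.
- exact: sigmaC2_mul_le_12.
- by rewrite mulrC sigmaC1_mul_ge_1n.
- by rewrite mulrC sigmaC2_mul_le_21.
Qed.

End SingularValues.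

Theorem lemma2p4 (R : realType) (d : nat) : (1 < d)%N ->
  (* K = R *)
  (forall (w1 w2 : 'M[R]_d), w1 \in unitmx -> w2 \in unitmx ->
     forall w : 'M[R]_d, w = w1 \/ w = w2 ->
       sigmaR (w1 *m w2) 1 / sigmaR (w1 *m w2) 2 >=
       (sigmaR w d ^+ 2 / sigmaR w 1 ^+ 2)
         * (sigmaR w1 1 / sigmaR w1 2) * (sigmaR w2 1 / sigmaR w2 2)) /\
  (* K = C *)
  (forall (w1 w2 : 'M[R[i]]_d), w1 \in unitmx -> w2 \in unitmx ->
     forall w : 'M[R[i]]_d, w = w1 \/ w = w2 ->
       sigmaC (w1 *m w2) 1 / sigmaC (w1 *m w2) 2 >=
       (sigmaC w d ^+ 2 / sigmaC w 1 ^+ 2)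
         * (sigmaC w1 1 / sigmaC w1 2) * (sigmaC w2 1 / sigmaC w2 2)).
Proof.
move=> d_gt1; split; last exact: sigmaC_ratio_mul_ge.
move=> w1 w2 w1_unit w2_unit w w_eq.
rewrite /sigmaR map_mxM; apply: sigmaC_ratio_mul_ge; rewrite ?map_unitmx //.
by case: w_eq => ->; [left | right].
Qed.
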